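(* Let $G$ be a connected chordal graph. Then there exists a spanning cactus subgraph of $G$ with the maximum possible number of edges (among all spanning cactus subgraphs of $G$) in which every cycle has length $3$.
   Context: All graphs are finite, simple and undirected. A graph is chordal if it has no induced cycle of length greater than $3$. A cactus is a connected graph in which every edge lies in at most one cycle. A spanning cactus subgraph of $G$ is a subgraph of $G$ with vertex set $V(G)$ that is a cactus. *)

From mathcomp Require Import all_boot.
Set Implicit Arguments. Unset Strict Implicit. Unset Printing Implicit Defensive.

Definition simple_graph (T : finType) (e : rel T) :=
  irreflexive e /\ symmetric e.

Definition graph_connected (T : finType) (r : rel T) :=
  forall x y : T, connect r x y.

Definition is_cycle (T : finType) (r : rel T) (c : seq T) :=
  ucycleb r c && (2 < size c).

Definition cycle_edges (T : finType) (c : seq T) : {set {set T}} :=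
  [set [set x; next c x] | x in c].

Definition induced_cycle (T : finType) (e : rel T) (c : seq T) :=
  is_cycle e c /\
  (forall x y, x \in c -> y \in c -> e x y -> (y == next c x) || (x == next c y)).

Definition chordal (T : finType) (e : rel T) :=
  forall c, induced_cycle e c -> size c <= 3.

(* Cactus: connected, and every edge lies in at most one cycle
   (cycles identified with their edge sets). *)
Definition cactus (T : finType) (r : rel T) :=
  graph_connected r /\
  (forall (A : {set T}) c1 c2, is_cycle r c1 -> is_cycle r c2 ->
     A \in cycle_edges c1 -> A \in cycle_edges c2 ->
     cycle_edges c1 = cycle_edges c2).

Definition adj_of (T : finType) (F : {set {set T}}) : rel T :=
  fun x y => (x != y) && ([set x; y] \in F).

Definition edge_subset (T : finType) (e : rel T) (F : {set {set T}}) :=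
  forall A, A \in F -> exists x y, e x y /\ A = [set x; y].

Definition spanning_cactus (T : finType) (e : rel T) (F : {set {set T}}) :=
  edge_subset e F /\ cactus (adj_of F).

(* A spanning tree is a spanning cactus, so there is a spanning cactus with the
   maximum number of edges; among those take F with the fewest edges lying on
   cycles. Suppose F has a cycle C of length at least 4. As G is chordal, C has a
   chord xy; write C = x ... y v ... l x, with inner vertices on the arc from x to
   y. Replace the edge yv by xy. Connectivity is kept, and so is the cactus
   property: in a cactus a simple path between two vertices of a cycle runs along
   that cycle, so every new cycle through xy is the one formed by xy and the arc
   from x to y. The number of edges is unchanged, but yv and lx no longer lie on
   cycles while only xy was added, contradicting the choice of F. *)

From mathcomp Require Import all_boot boolp.
Set Implicit Arguments. Unset Strict Implicit. Unset Printing Implicit Defensive.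

Section CycleEdges.
Variable T : finType.
Implicit Types (F : {set {set T}}) (c : seq T).

Lemma set2_inj (a b x y : T) : [set a; b] = [set x; y] ->
  (a = x /\ b = y) \/ (a = y /\ b = x).
Proof.
move=> E.
have ha : a \in [set x; y] by rewrite -E set21.
have hb : b \in [set x; y] by rewrite -E set22.
move: E; case/set2P: ha => ->; case/set2P: hb => -> E.
- have : y \in [set x; x] by rewrite E set22.
  by case/set2P=> ->; left.
- by left.
- by right.
- have : x \in [set y; y] by rewrite E set21.
  by case/set2P=> ->; left.
Qed.

Lemma adj_of_sym F : symmetric (adj_of F).
Proof. by move=> x y; rewrite /adj_of eq_sym setUC. Qed.

Lemma cycle_edgesP c E :
  reflect (exists2 z, z \in c & E = [set z; next c z]) (E \in cycle_edges c).
Proof. exact: imsetP. Qed.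

Lemma mem_cycle_edges c z : z \in c -> [set z; next c z] \in cycle_edges c.
Proof. by move=> zc; apply/cycle_edgesP; exists z. Qed.

Lemma cycle_edges_adj F c E : cycle (adj_of F) c -> E \in cycle_edges c -> E \in F.
Proof. by move=> cy /cycle_edgesP[z zc ->]; case/andP: (next_cycle cy zc). Qed.

Lemma cycle_edges_vertex c E z : E \in cycle_edges c -> z \in E -> z \in c.
Proof. by case/cycle_edgesP=> w wc -> /set2P[]->; rewrite ?mem_next. Qed.

Lemma cycle_edges_rot n c : uniq c -> cycle_edges (rot n c) = cycle_edges c.
Proof.
move=> uc; apply/setP=> E; apply/cycle_edgesP/cycle_edgesP=> -[z zc ->];
  by exists z; rewrite ?next_rot // ?mem_rot // -(mem_rot n).
Qed.

Lemma cycle_edges_rev c : uniq c -> cycle_edges (rev c) = cycle_edges c.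
Proof.
move=> uc; apply/setP=> E; apply/cycle_edgesP/cycle_edgesP=> -[z zc ->].
  rewrite mem_rev in zc; rewrite next_rev //.
  by exists (prev c z); rewrite ?mem_prev // next_prev // setUC.
by exists (next c z); rewrite ?mem_rev ?mem_next // next_rev // prev_next // setUC.
Qed.

Lemma is_cycle_rot (r : rel T) n c : is_cycle r (rot n c) = is_cycle r c.
Proof. by rewrite /is_cycle /ucycleb rot_cycle rot_uniq size_rot. Qed.

Lemma next_head (a b : T) s : next [:: a, b & s] a = b.
Proof. by rewrite /next /= eqxx. Qed.

Lemma next_last (a : T) s : uniq (a :: s) -> next (a :: s) (last a s) = a.
Proof. by move=> u; rewrite next_nth mem_last index_last // nth_default. Qed.

Lemma index_next (h : T) s z : uniq (h :: s) -> z \in h :: s -> z != last h s ->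
  index (next (h :: s) z) (h :: s) = (index z (h :: s)).+1.
Proof.
move=> u zin zl; rewrite next_nth zin.
have zs : index z (h :: s) < size s.
  move: (zin); rewrite -index_mem [size _]/= ltnS leq_eqVlt => /orP[/eqP e|//].
  by case/eqP: zl; rewrite (last_nth h) -e nth_index.
by rewrite -[nth h s _]/(nth h (h :: s) _.+1) index_uniq.
Qed.

End CycleEdges.

Section Connectivity.
Variable T : finType.
Implicit Types (F : {set {set T}}) (A : {set T}) (t : seq T).

Lemma path_touches_interior (r : rel T) (a b : T) t :
  path r a (t ++ [:: b]) -> t != [::] ->
  path (fun p q => r p q && ((p \in t) || (q \in t))) a (t ++ [:: b]).
Proof.
elim: t a => // u t IH a /= /andP[rau pt] _.
rewrite rau mem_head orbT /=.
case: t IH pt => [|v t] IH pt; first by move: pt => /= /andP[-> _]; rewrite mem_head.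
apply: sub_path (IH _ pt isT) => p q /andP[-> /orP[] H] /=;
  apply/orP; [left|right]; by rewrite in_cons H orbT.
Qed.

Lemma adj_of_setD1 F A p q : adj_of F p q -> [set p; q] != A -> adj_of (F :\ A) p q.
Proof. by rewrite /adj_of in_setD1 => /andP[-> ->] ->. Qed.

Lemma adj_of_subset F F' : F \subset F' -> subrel (adj_of F) (adj_of F').
Proof. by move=> /subsetP sFF' p q /andP[pq /sFF' pqF']; rewrite /adj_of pq pqF'. Qed.

Lemma interior_edge_neq (a h p q : T) t :
  a \notin t -> h \notin t -> (p \in t) || (q \in t) -> [set p; q] != [set a; h].
Proof.
move=> a_t h_t; apply: contraTneq => /set2_inj[][-> ->];
  by rewrite negb_or a_t h_t.
Qed.

(* The cycle minus the edge [a, h] is a path from h back to a. *)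
Lemma connected_setD1_cycle_edge F (a h : T) t :
  graph_connected (adj_of F) -> uniq [:: a, h & t] ->
  cycle (adj_of F) [:: a, h & t] -> t != [::] ->
  graph_connected (adj_of (F :\ [set a; h])).
Proof.
move=> conn u cy tn.
set G := adj_of (F :\ [set a; h]).
have symG : connect_sym G by apply/sym_connect_sym/adj_of_sym.
have ha : connect G h a.
  move: cy u => /= /andP[_]; rewrite -cats1 !inE negb_or => pF.
  case/andP=> /andP[_ a_t] /andP[h_t _].
  have pG : path G h (t ++ [:: a]).
    apply: sub_path (path_touches_interior pF tn) => p q /andP[apq H].
    exact: adj_of_setD1 apq (interior_edge_neq a_t h_t H).
  by have := path_connect pG (mem_last h (t ++ [:: a])); rewrite last_cat.
have sub : subrel (adj_of F) (connect G).
  move=> p q apq; have [/set2_inj E|E] := eqVneq [set p; q] [set a; h].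
    by case: E => -[-> ->]; rewrite // symG.
  exact/connect1/adj_of_setD1.
by move=> x y; apply: connect_sub sub _ _ (conn x y).
Qed.

End Connectivity.

Section SpanningCactus.
Variables (T : finType) (e : rel T).
Hypothesis e_simple : simple_graph e.

Lemma edge_subset_adj F : edge_subset e F -> subrel (adj_of F) e.
Proof.
have [_ esym] := e_simple.
by move=> eF p q /andP[_ /eF[a [b [eab /set2_inj[][->->]]]]]; rewrite // esym.
Qed.

Lemma is_cycle_edge_subset F c :
  edge_subset e F -> is_cycle (adj_of F) c -> is_cycle e c.
Proof.
move=> eF /andP[/andP[cc uc] sc]; rewrite /is_cycle /ucycleb uc sc !andbT.
exact: (sub_cycle (edge_subset_adj eF) cc).
Qed.

(* A minimal connected spanning edge set is a spanning tree, which has no cycle. *)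
Lemma spanning_cactus_exists :
  graph_connected e -> exists F, spanning_cactus e F.
Proof.
have [eirr _] := e_simple; move=> conn.
pose conn_span F := edge_subset e F /\ graph_connected (adj_of F).
pose EG := [set A : {set T} | [exists x, exists y, e x y && (A == [set x; y])]].
have spanEG : conn_span EG.
  split=> [A | x y].
    by rewrite inE => /existsP[x /existsP[y /andP[exy /eqP ->]]]; exists x, y.
  apply: connect_sub (conn x y) => p q epq; apply: connect1.
  rewrite /adj_of inE; apply/andP; split.
    by apply: contraTneq epq => ->; rewrite eirr.
  by apply/existsP; exists p; apply/existsP; exists q; rewrite epq eqxx.
have [F /asboolP[spanF connF] minF] :=
  arg_minnP (P := fun F => `[< conn_span F >]) (fun F => #|F|) (asboolT spanEG).
exists F; split=> //; split=> // A c1 c2 /andP[/andP[cyc uc] sc] _ _ _.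
exfalso; case: c1 cyc uc sc => [|a [|h t]] // cyc uc sc.
have tn : t != [::] by case: (t) sc.
have edge_ah : [set a; h] \in F by case/andP: cyc => /andP[_ ->].
have : conn_span (F :\ [set a; h]).
  split; last exact: connected_setD1_cycle_edge connF uc cyc tn.
  by move=> B /setD1P[_ /spanF].
by move/asboolP/minF; rewrite (cardsD1 [set a; h]) edge_ah ltnn.
Qed.

End SpanningCactus.

Definition edge_in_one_cycle (T : finType) (r : rel T) :=
  forall (A : {set T}) c1 c2, is_cycle r c1 -> is_cycle r c2 ->
    A \in cycle_edges c1 -> A \in cycle_edges c2 -> cycle_edges c1 = cycle_edges c2.

Section CactusPaths.
Variables (T : finType) (r : rel T).
Hypothesis r_sym : symmetric r.
Implicit Types (a z : T) (Q s : seq T).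

Lemma splice_ucycle a z t1 t2 Q :
  ucycleb r (a :: t1 ++ z :: t2) -> path r a (rcons Q z) -> uniq Q ->
  all (fun q => q \notin a :: t1 ++ z :: t2) Q ->
  ucycleb r (a :: t1 ++ z :: rev Q).
Proof.
move=> /andP[cc uc] pQ uQ outQ; apply/andP; split.
  rewrite /= -cats1 -catA /= cats1 -[t1 ++ _]/(t1 ++ [:: z] ++ _) catA.
  rewrite cat_path last_cat /=; apply/andP; split.
    by move: cc; rewrite /= -cats1 -catA -[t1 ++ _]/(t1 ++ [:: z] ++ _) catA
      cat_path => /andP[].
  have := rev_path r a (rcons Q z).
  rewrite last_rcons belast_rcons rev_cons => ->.
  by apply: etrans pQ; apply: eq_path => u v; rewrite r_sym.
rewrite -[z :: _]/([:: z] ++ _) catA -cat_cons cat_uniq rev_uniq uQ andbT.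
apply/andP; split.
  by move: uc; rewrite -[z :: t2]/([:: z] ++ t2) catA -cat_cons cat_uniq => /andP[].
apply/hasPn=> q; rewrite mem_rev => qQ; have := allP outQ q qQ.
apply: contra; rewrite -!cat_cons !mem_cat mem_seq1 => /orP[->//|/eqP->].
by rewrite mem_head orbT.
Qed.

Hypothesis r_one : edge_in_one_cycle r.
Variable c : seq T.
Hypothesis c_cycle : is_cycle r c.

Let c_uniq : uniq c. Proof. by case/andP: c_cycle => /andP[]. Qed.

(* Otherwise the path would close, with an arc of [c], a second cycle through
   the edge of [c] leaving [a]. *)
Lemma ear_on_cycle a z Q : a \in c -> z \in c ->
  all (fun q => q \notin c) Q -> path r a (rcons Q z) -> uniq (a :: rcons Q z) ->
  (Q == [::]) && ([set a; z] \in cycle_edges c).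
Proof.
move=> ac zc outQ pQ uQ.
have za : z != a by apply: contraTneq uQ => ->; rewrite /= mem_rcons mem_head.
have uQ' : uniq Q by move: uQ; rewrite /= rcons_uniq => /and3P[].
case/rot_to: (ac) => i t ct.
have zt : z \in t by move: zc; rewrite -(mem_rot i) ct inE (negPf za).
move: ct; case/splitPr: zt => t1 t2 ct.
have memc w : (w \in c) = (w \in a :: t1 ++ z :: t2) by rewrite -ct mem_rot.
set D := a :: t1 ++ z :: rev Q.
have /andP[cD uD] : ucycleb r D.
  apply: (splice_ucycle (t2 := t2)) => //.
    by rewrite -ct /ucycleb rot_cycle rot_uniq; case/andP: c_cycle.
  by apply: sub_all outQ => q; rewrite memc.
have nDa : next D a = next c a.
  rewrite -(next_rot i c_uniq) ct /D.
  by case: (t1) => [|b t1']; rewrite ?cat0s ?cat_cons !next_head.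
have eD : 2 < size D -> cycle_edges D = cycle_edges c.
  move=> sD; apply: (r_one (A := [set a; next c a])) => //.
  - by rewrite /is_cycle /ucycleb cD uD sD.
  - by rewrite -nDa mem_cycle_edges ?mem_head.
  - by rewrite mem_cycle_edges // memc mem_head.
case: Q => [|q Q'] in outQ pQ uQ uQ' D cD uD nDa eD *; rewrite ?eqxx /=.
  have [t1E|t1n] := eqVneq t1 [::].
    have <- : next c a = z by rewrite -(next_rot i c_uniq) ct t1E next_head.
    exact: mem_cycle_edges.
  have -> : [set a; z] = [set z; next D z].
    suff -> : next D z = a by rewrite setUC.
    by have := next_last (a := a) (s := t1 ++ [:: z]); rewrite last_cat /=; apply.
  rewrite -eD ?mem_cycle_edges //.
    by rewrite /D !inE mem_cat mem_head !orbT.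
  by rewrite /D /= size_cat /= addn1 !ltnS lt0n size_eq0.
have qD : q \in D by rewrite !inE mem_cat !inE mem_rev mem_head !orbT.
have sD : 2 < size D by rewrite /D /= size_cat /= size_rev /= !addnS.
have := mem_cycle_edges qD; rewrite eD // => /cycle_edges_vertex/(_ (set21 _ _)).
by rewrite (negPf (allP outQ q (mem_head _ _))).
Qed.

Lemma no_excursion a Q s : a \in c -> all (fun q => q \notin c) Q -> Q != [::] ->
  path r a (Q ++ s) -> uniq (a :: Q ++ s) -> last a (Q ++ s) \notin c.
Proof.
move=> ac; elim: s Q => [|z s IH] Q outQ Qn pQ uQ.
  case: Q outQ Qn {pQ uQ} => [|q Q'] //= /andP[qc outQ'] _; rewrite cats0.
  by have /predU1P[->|/(allP outQ')] := mem_last q Q'.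
have [zc|zc] := boolP (z \in c); last first.
  rewrite -cat_rcons; apply: IH; rewrite ?cat_rcons ?all_rcons ?zc //.
  by case: (Q).
suff /andP[/eqP Q0 _] : (Q == [::]) && ([set a; z] \in cycle_edges c).
  by rewrite Q0 in Qn.
apply: ear_on_cycle => //.
- by move: pQ; rewrite -cat_rcons cat_path => /andP[].
- by move: uQ; rewrite -cat_rcons -cat_cons cat_uniq => /andP[].
Qed.

Lemma path_along_cycle a s : a \in c -> path r a s -> uniq (a :: s) ->
  last a s \in c -> path (fun p q => r p q && ([set p; q] \in cycle_edges c)) a s.
Proof.
elim: s a => // q s IH a ac /= /andP[aq ps] /andP[a_qs uqs] l.
have [qc|qc] := boolP (q \in c).
  have a_q : a != q by move: a_qs; rewrite inE negb_or => /andP[].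
  have : ([::] == [::] :> seq T) && ([set a; q] \in cycle_edges c).
    by apply: ear_on_cycle => //=; rewrite ?aq ?inE ?a_q.
  by case/andP=> _ ->; rewrite aq IH.
have := @no_excursion a [:: q] s ac; rewrite /= qc aq ps l.
by rewrite a_qs uqs => /(_ isT isT isT isT).
Qed.

End CactusPaths.

Section PathGraph.
Variable T : eqType.
Variable L : seq T.

Definition seq_adj : rel T := fun p q =>
  [&& p \in L, q \in L &
      (index q L == (index p L).+1) || (index p L == (index q L).+1)].

Lemma seq_adj_sym : symmetric seq_adj.
Proof. by move=> p q; rewrite /seq_adj orbC; case: (p \in L); case: (q \in L). Qed.

Lemma seq_adj_path_index i (q : T) s : path seq_adj q s -> index q L < i ->
  i <= index (last q s) L -> exists2 w, w \in q :: s & index w L = i.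
Proof.
elim: s q => [|p s IH] q /=; first by move=> _ qi /leq_ltn_trans/(_ qi); rewrite ltnn.
move=> /andP[/and3P[_ _ qp] ps] qi ilast.
have [pi|ip] := ltnP (index p L) i.
  by have [w ws wi] := IH p ps pi ilast; exists w; rewrite // inE ws orbT.
exists p; first by rewrite !inE eqxx orbT.
apply/eqP; rewrite eqn_leq ip andbT.
case/orP: qp => /eqP e; first by rewrite e.
by apply: ltnW; rewrite -e ltnW.
Qed.

Lemma seq_adj_path_suffix (x0 a : T) s : uniq L -> path seq_adj a s ->
  uniq (a :: s) -> a \in L -> last a s = last x0 L -> a :: s = drop (index a L) L.
Proof.
move=> uL; elim: s a => [|q s IH] a.
  move=> _ _ aL /= la; case: L uL aL la => [|h L'] // uL aL la.
  rewrite la [last x0 _]/= index_last //; apply/esym.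
  by rewrite lastI -cats1 drop_size_cat // size_belast.
move=> /= /andP[aq ps] /andP[a_qs uqs] aL la.
have aLs : index a L < size L by rewrite index_mem.
case/and3P: aq => _ qL /orP[] /eqP qa.
  by rewrite (IH q ps uqs qL la) qa (drop_nth a aLs) nth_index.
have hl : index a L <= index (last q s) L.
  rewrite la; case: L uL aL aLs {qa qL la IH ps} => [|h L'] // uL aL aLs.
  by rewrite [last x0 _]/= index_last // -ltnS.
have qa' : index q L < index a L by rewrite qa.
have [w ws wa] := seq_adj_path_index ps qa' hl.
have wL : w \in L by rewrite -index_mem wa.
by move: ws a_qs; rewrite -(nth_index a wL) wa nth_index // => ->.
Qed.

End PathGraph.

Section ChordSwap.
Variables (T : finType) (F : {set {set T}}).
Variables (x y v : T) (s1 s2 : seq T).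
Hypothesis F_one : edge_in_one_cycle (adj_of F).
Let c := x :: s1 ++ y :: v :: s2.
Hypothesis c_cycle : is_cycle (adj_of F) c.
Hypothesis s1_neq_nil : s1 != [::].

(* Swapping the cycle edge [uv] for the chord [xy]: the chord closes the cycle
   [C1] with the arc from [x] to [y], and [L] is [c] opened up at [uv]. *)
Let C1 := x :: s1 ++ [:: y].
Let L := v :: s2 ++ C1.
Let uv := [set y; v].
Let l := last v s2.
Let w2 := [set l; x].
Let xy := [set x; y].
Let F' := xy |: (F :\ uv).

Let c_uniq : uniq c. Proof. by case/andP: c_cycle => /andP[]. Qed.
Let c_adj : cycle (adj_of F) c. Proof. by case/andP: c_cycle => /andP[]. Qed.
Let cE : c = C1 ++ v :: s2. Proof. by rewrite /c /C1 /= -catA. Qed.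
Let LE : L = rot (size C1) c. Proof. by rewrite cE rot_size_cat. Qed.
Let L_uniq : uniq L. Proof. by rewrite LE rot_uniq. Qed.
Let C1_uniq : uniq C1. Proof. by move: c_uniq; rewrite cE cat_uniq => /andP[]. Qed.

Let arcs_disjoint w : w \in v :: s2 -> w \notin C1.
Proof. by move: c_uniq; rewrite cE cat_uniq => /and3P[_ /hasPn/(_ w)]. Qed.

Let mem_L w : (w \in L) = (w \in c). Proof. by rewrite LE mem_rot. Qed.
Let next_L w : next L w = next c w. Proof. by rewrite LE next_rot. Qed.
Let last_L : last v (s2 ++ C1) = y. Proof. by rewrite last_cat /= last_cat. Qed.
Let last_c : last x (s1 ++ y :: v :: s2) = l. Proof. by rewrite last_cat. Qed.

Let next_y : next c y = v. Proof. by rewrite -next_L -{1}last_L next_last. Qed.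
Let next_l : next c l = x. Proof. by rewrite -last_c next_last. Qed.
Let x_c : x \in c. Proof. exact: mem_head. Qed.
Let y_c : y \in c. Proof. by rewrite /c !inE mem_cat !inE eqxx !orbT. Qed.
Let x_L : x \in L. Proof. by rewrite mem_L. Qed.

Let x_neq_y : x != y.
Proof. by move: C1_uniq; rewrite /= mem_cat inE negb_or => /andP[/andP[_]]. Qed.

Let uv_cycle : uv \in cycle_edges c.
Proof. by rewrite /uv -next_y mem_cycle_edges. Qed.
Let w2_cycle : w2 \in cycle_edges c.
Proof.
by rewrite /w2 -[in X in [set _; X]]next_l mem_cycle_edges // -last_c mem_last.
Qed.
Let uv_F : uv \in F. Proof. exact: cycle_edges_adj c_adj uv_cycle. Qed.

Let uv_neq_w2 : uv != w2.
Proof.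
apply/eqP => /set2_inj[[yl _]|[yx _]]; last by move: x_neq_y; rewrite yx eqxx.
have := arcs_disjoint (mem_last v s2).
by rewrite -/l -yl /C1 !inE mem_cat !inE eqxx !orbT.
Qed.

Let xy_not_cycle : xy \notin cycle_edges c.
Proof.
have y_s1 : y \notin s1.
  by move: C1_uniq; rewrite /= cat_uniq => /and3P[_ _]; rewrite /= orbF => /andP[].
have next_x : next c x \in s1.
  have [b [s s1E]] : exists b s, s1 = b :: s.
    by case: s1 s1_neq_nil => // b s; exists b, s.
  by rewrite /c s1E cat_cons next_head mem_head.
apply/negP => /cycle_edgesP[z zc /set2_inj[[xz yn]|[xn yz]]].
  by move: y_s1; rewrite yn -xz next_x.
by have := arcs_disjoint (mem_head v s2); rewrite -next_y yz -xn /C1 mem_head.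
Qed.

Let xy_notin_F : xy \notin F.
Proof.
apply: contra xy_not_cycle => xyF.
have /andP[_ //] : ([::] == [::] :> seq T) && (xy \in cycle_edges c).
apply: (ear_on_cycle (@adj_of_sym _ F) F_one) => //=.
  by rewrite andbT /adj_of x_neq_y -/xy xyF.
by rewrite andbT inE x_neq_y.
Qed.

Lemma swap_card : #|F'| = #|F|.
Proof.
rewrite /F' cardsU1 in_setD1 (negPf xy_notin_F) andbF.
by rewrite (cardsD1 uv F) uv_F.
Qed.

Let next_C1 z : z \in x :: s1 -> next C1 z = next c z.
Proof.
move=> zin.
have zC1 : z \in C1 by rewrite /C1 -cat_cons mem_cat zin.
have zc : z \in c by rewrite /c -cat_cons mem_cat zin.
have idx w : index z (x :: s1 ++ w) = index z (x :: s1).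
  by rewrite -cat_cons index_cat zin.
rewrite !next_nth zC1 zc /C1 /c !idx !nth_cat.
have : index z (x :: s1) <= size s1 by rewrite -ltnS index_mem.
by rewrite leq_eqVlt => /orP[/eqP->|->]; rewrite ?ltnn ?subnn.
Qed.

Let arc_edges E : E \in cycle_edges C1 ->
  E = xy \/ [/\ E \in cycle_edges c, E != uv & E != w2].
Proof.
case/cycle_edgesP => z zC1 ->.
have [->|zy] := eqVneq z y.
  left; have := next_last C1_uniq; rewrite last_cat /= -/C1 => ->.
  by rewrite /xy setUC.
have zin : z \in x :: s1.
  by move: zC1; rewrite /C1 -cat_cons mem_cat mem_seq1 (negPf zy) orbF.
have nC1 : next c z \in C1 by rewrite -next_C1 // mem_next.
have l_C1 : l \notin C1 by apply/arcs_disjoint/mem_last.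
right; rewrite next_C1 //; split.
- by rewrite mem_cycle_edges // cE mem_cat zC1.
- apply/eqP => /set2_inj[[zy' _]|[vz _]]; first by rewrite zy' eqxx in zy.
  by have := arcs_disjoint (mem_head v s2); rewrite -vz zC1.
- by apply/eqP => /set2_inj[[zl _]|[_ nl]]; move: l_C1; rewrite -?zl -?nl ?zC1 ?nC1.
Qed.

Let adj_F'_del p q : adj_of F' p q -> [set p; q] != xy -> adj_of (F :\ uv) p q.
Proof.
by rewrite /adj_of /F' in_setU1 => /andP[-> /orP[/eqP->|->]] //; rewrite eqxx.
Qed.

Let adj_del_F : subrel (adj_of (F :\ uv)) (adj_of F).
Proof. by apply: adj_of_subset; apply: subD1set. Qed.

Let path_del_seq_adj a s : a \in c -> path (adj_of (F :\ uv)) a s ->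
  uniq (a :: s) -> last a s \in c -> path (seq_adj L) a s.
Proof.
move=> ac p u lc.
have pc :=
  path_along_cycle (@adj_of_sym _ F) F_one c_cycle ac (sub_path adj_del_F p) u lc.
have : path [rel a b | adj_of (F :\ uv) a b &&
                       (adj_of F a b && ([set a; b] \in cycle_edges c))] a s.
  by rewrite path_relI p pc.
apply: sub_path => p' q /andP[pq /andP[_ /cycle_edgesP[z zc E]]].
have zy : z != y.
  by apply: contraTneq pq => zy; rewrite /adj_of in_setD1 E zy next_y -/uv eqxx andbF.
have zL : z \in L by rewrite mem_L.
have idx : index (next c z) L = (index z L).+1.
  by rewrite -next_L index_next // last_L.
have szn : seq_adj L z (next c z) by rewrite /seq_adj zL mem_L mem_next zc idx eqxx.
by case/set2_inj: E => -[-> ->]; rewrite // seq_adj_sym.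
Qed.

Let arc_path s : path (seq_adj L) x s -> uniq (x :: s) -> last x s = y -> x :: s = C1.
Proof.
move=> p u l_y.
have x_s2 : x \notin v :: s2 by apply: contraL (mem_head _ _); apply: arcs_disjoint.
rewrite (seq_adj_path_suffix (x0 := v) L_uniq p u x_L) ?l_y ?last_L //.
by rewrite /L -cat_cons index_cat (negPf x_s2) /= eqxx addn0 drop_size_cat.
Qed.

(* Off the chord, a cycle through [xy] is a path of [F] minus [uv] between
   vertices of [c], hence a path of [L]. *)
Let chord_cycle_path z w t : is_cycle (adj_of F') [:: z, w & t] -> xy = [set z; w] ->
  path (seq_adj L) w (rcons t z).
Proof.
move=> /andP[/andP[cD u'] sD] E.
have tn : t != [::] by case: (t) sD.
have z_t : z \notin t by move: u'; rewrite /= inE negb_or => /andP[/andP[_ ->]].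
have w_t : w \notin t by case/andP: u' => _ /andP[].
have pF' : path (adj_of F') w (t ++ [:: z]) by case/andP: cD; rewrite cats1.
have [zc wc] : z \in c /\ w \in c by case/set2_inj: E => -[<- <-].
rewrite -cats1; apply: path_del_seq_adj; rewrite ?last_cat //.
- apply: sub_path (path_touches_interior pF' tn) => p q /andP[pq H].
  by apply: adj_F'_del pq _; rewrite E (interior_edge_neq z_t w_t H).
- by rewrite cats1 -rcons_cons -rot1_cons rot_uniq.
Qed.

Lemma swap_cycle_through_chord D : is_cycle (adj_of F') D -> xy \in cycle_edges D ->
  cycle_edges D = cycle_edges C1.
Proof.
move=> cyD /cycle_edgesP[z zD E]; have /andP[/andP[_ uD] sD] := cyD.
case/rot_to: zD => j [|w t] rE; first by move: sD; rewrite -(size_rot j) rE.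
rewrite -(next_rot j uD) rE next_head in E.
have uw : uniq (w :: rcons t z).
  by rewrite -rcons_cons -rot1_cons rot_uniq -rE rot_uniq.
have cyz : is_cycle (adj_of F') [:: z, w & t] by rewrite -rE is_cycle_rot.
have pL := chord_cycle_path cyz E.
rewrite -(cycle_edges_rot j uD) rE; move: pL uw.
case/set2_inj: E => -[<- <-] pL uw.
- have pL' : path (seq_adj L) x (rcons (rev t) y).
    have := rev_path (seq_adj L) y (rcons t x).
    rewrite last_rcons belast_rcons rev_cons => ->.
    by apply: sub_path pL => a b; rewrite seq_adj_sym.
  have uL' : uniq (x :: rcons (rev t) y).
    by rewrite -rcons_cons -rev_rcons -rev_cons rev_uniq.
  have [/eqP] := arc_path pL' uL' (last_rcons _ _ _).
  rewrite cats1 eqseq_rcons eqxx andbT => /eqP tE.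
  have -> : [:: x, y & t] = rev (rot 1 C1).
    by rewrite /C1 rot1_cons rev_rcons rev_cat -tE revK.
  by rewrite cycle_edges_rev ?rot_uniq // cycle_edges_rot.
- have [/eqP] := arc_path pL uw (last_rcons _ _ _).
  rewrite cats1 eqseq_rcons eqxx andbT => /eqP tE.
  have -> : [:: y, x & t] = rot (size (x :: s1)) C1.
    by rewrite /C1 -cat_cons rot_size_cat tE.
  by rewrite cycle_edges_rot.
Qed.

Let cycle_avoiding_chord D : is_cycle (adj_of F') D -> xy \notin cycle_edges D ->
  is_cycle (adj_of F) D /\ uv \notin cycle_edges D.
Proof.
move=> /andP[/andP[cD uD] sD] xyD.
have cD' : cycle (adj_of (F :\ uv)) D.
  apply: (cycle_from_next uD) => p pD; apply: adj_F'_del (next_cycle cD pD) _.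
  by apply: contraNneq xyD => <-; apply: mem_cycle_edges.
split; first by rewrite /is_cycle /ucycleb uD sD (sub_cycle adj_del_F cD').
by apply/negP => /(cycle_edges_adj cD'); rewrite in_setD1 eqxx.
Qed.

Lemma swap_edge_in_one_cycle : edge_in_one_cycle (adj_of F').
Proof.
(* A cycle through the chord has the edges of [C1], all but [xy] on [c];
   a cycle avoiding it is a cycle of [F] without [uv], so it cannot be [c]. *)
have mixed D1 D2 A : is_cycle (adj_of F') D1 -> is_cycle (adj_of F') D2 ->
    xy \in cycle_edges D1 -> xy \notin cycle_edges D2 ->
    A \in cycle_edges D1 -> A \in cycle_edges D2 -> False.
  move=> cy1 cy2 h1 h2; have [cyF2 uv2] := cycle_avoiding_chord cy2 h2.
  rewrite (swap_cycle_through_chord cy1 h1) => /arc_edges[->|[Ac _ _] A2].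
    by rewrite (negPf h2).
  by move: uv2; rewrite (F_one cyF2 c_cycle A2 Ac) uv_cycle.
move=> A D1 D2 cy1 cy2 A1 A2.
have [h1|h1] := boolP (xy \in cycle_edges D1);
  have [h2|h2] := boolP (xy \in cycle_edges D2).
- by rewrite (swap_cycle_through_chord cy1 h1) (swap_cycle_through_chord cy2 h2).
- by case: (mixed D1 D2 A).
- by case: (mixed D2 D1 A).
- have [cyF1 _] := cycle_avoiding_chord cy1 h1.
  have [cyF2 _] := cycle_avoiding_chord cy2 h2.
  exact: F_one cyF1 cyF2 A1 A2.
Qed.

Lemma swap_connected : graph_connected (adj_of F) -> graph_connected (adj_of F').
Proof.
move=> conn.
have rE : rot (size (x :: s1)) c = [:: y, v & s2 ++ x :: s1].
  by rewrite /c -cat_cons rot_size_cat.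
have tn : s2 ++ x :: s1 != [::] by case: (s2).
have := @connected_setD1_cycle_edge T F y v _ conn _ _ tn.
rewrite -rE rot_uniq rot_cycle => /(_ c_uniq c_adj) conn' p q.
apply: connect_sub (conn' p q) => a b /adj_of_subset/connect1; apply.
exact: subsetUr.
Qed.

Lemma swap_cycle_edges D E : is_cycle (adj_of F') D -> E \in cycle_edges D ->
  E = xy \/ [/\ exists2 D', is_cycle (adj_of F) D' & E \in cycle_edges D',
                 E != uv & E != w2].
Proof.
move=> cyD ED; have [h|h] := boolP (xy \in cycle_edges D).
  move: ED; rewrite (swap_cycle_through_chord cyD h) => /arc_edges[->|[Ec n1 n2]].
    by left.
  by right; split=> //; exists c.
have [cyF uvD] := cycle_avoiding_chord cyD h.
right; split; first by exists D.
- by apply: contraNneq uvD => <-.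
- apply: contraNneq uvD => Ew2; rewrite Ew2 in ED.
  by rewrite (F_one cyF c_cycle ED w2_cycle) uv_cycle.
Qed.

Lemma swap_removed_cycle_edges :
  [/\ uv \in cycle_edges c, w2 \in cycle_edges c & uv != w2].
Proof. exact: And3 uv_cycle w2_cycle uv_neq_w2. Qed.

End ChordSwap.

Definition cycle_edge_set (T : finType) (F : {set {set T}}) : {set {set T}} :=
  [set E | `[< exists2 D, is_cycle (adj_of F) D & E \in cycle_edges D >]].

(* The swap takes the edges [yv] and [(last v s2) x] off cycles and puts only
   [xy] on one. *)
Lemma chord_swap (T : finType) (e : rel T) F (x y v : T) s1 s2 :
  spanning_cactus e F -> e x y -> is_cycle (adj_of F) (x :: s1 ++ y :: v :: s2) ->
  s1 != [::] ->
  exists F', [/\ spanning_cactus e F', #|F'| = #|F| &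
                 #|cycle_edge_set F'| < #|cycle_edge_set F|].
Proof.
move=> [eF [conn one]] exy cyc s1n.
set c := x :: s1 ++ y :: v :: s2 in cyc.
set uv := [set y; v]; set w2 := [set last v s2; x]; set xy := [set x; y].
exists (xy |: F :\ uv); split.
- split; last split.
  + move=> A /setU1P[-> | /setD1P[_ /eF] //]; by exists x, y.
  + exact: swap_connected cyc conn.
  + exact: swap_edge_in_one_cycle one cyc.
- exact: swap_card one cyc s1n.
have on_c E : E \in cycle_edges c -> E \in cycle_edge_set F.
  by move=> Ec; rewrite inE; apply/asboolP; exists c.
have [/on_c uv_c /on_c w2_c uv_w2] := swap_removed_cycle_edges cyc.
have {}w2_c : w2 \in cycle_edge_set F :\ uv by rewrite in_setD1 eq_sym uv_w2.
have sub :
    cycle_edge_set (xy |: F :\ uv) \subset xy |: (cycle_edge_set F :\ uv :\ w2).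
  apply/subsetP => E; rewrite inE => /asboolP[D cyD ED].
  case: (swap_cycle_edges one cyc cyD ED) => [->|[[D' cyD' ED'] Euv Ew2]].
    exact: setU11.
  by rewrite setU1r // !in_setD1 Euv Ew2 inE; apply/asboolP; exists D'.
apply: leq_ltn_trans (subset_leq_card sub) _.
rewrite cardsU1 (cardsD1 uv (cycle_edge_set F)) uv_c.
rewrite (cardsD1 w2 (cycle_edge_set F :\ uv)) w2_c.
by case: (xy \notin _).
Qed.

Lemma long_cycle_chord (T : finType) (e : rel T) c :
  irreflexive e -> chordal e -> is_cycle e c -> 3 < size c ->
  exists i x y s1 v s2,
    [/\ rot i c = x :: s1 ++ y :: v :: s2, e x y & s1 != [::]].
Proof.
move=> eirr chord cyc long.
have [x [y [xc yc exy [nyx nxy]]]] : exists x y, [/\ x \in c, y \in c, e x y &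
    y != next c x /\ x != next c y].
  apply: contrapT => noChord; suff /chord : induced_cycle e c by rewrite leqNgt long.
  split=> // x y xc yc exy; apply/negPn/negP; rewrite negb_or => /andP[nyx nxy].
  by apply: noChord; exists x, y.
have uc : uniq c by case/andP: cyc => /andP[].
have xy : x != y by apply: contraTneq exy => ->; rewrite eirr.
case/rot_to: xc => i t ct.
have yt : y \in t by move: yc; rewrite -(mem_rot i) ct inE eq_sym (negPf xy).
move: ct; case/splitPr: yt => s1 [|v s2] ct.
  have := next_last (a := x) (s := s1 ++ [:: y]); rewrite -ct rot_uniq last_cat /=.
  by move=> /(_ uc) nyE; move: nxy; rewrite -(next_rot i uc) nyE eqxx.
exists i, x, y, s1, v, s2; split=> //.
by apply: contraNneq nyx => s1E; rewrite -(next_rot i uc) ct s1E next_head.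
Qed.

Theorem mainTheorem9 (T : finType) (e : rel T) :
  simple_graph e -> graph_connected e -> chordal e ->
  exists F : {set {set T}},
    [/\ spanning_cactus e F,
        (forall F' : {set {set T}}, spanning_cactus e F' -> #|F'| <= #|F|) &
        (forall c, is_cycle (adj_of F) c -> size c = 3)].
Proof.
move=> simple conn chord; have [eirr _] := simple.
have [F0 sc0] := spanning_cactus_exists simple conn.
have [F1 /asboolP sc1 max1] :=
  arg_maxnP (P := fun F => `[< spanning_cactus e F >]) (fun F => #|F|) (asboolT sc0).
pose opt F := `[< spanning_cactus e F >] && (#|F| == #|F1|).
have opt1 : opt F1 by rewrite /opt eqxx andbT; apply/asboolP.
have [F /andP[/asboolP scF /eqP cardF] minF] :=
  arg_minnP (P := opt) (fun F => #|cycle_edge_set F|) opt1.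
exists F; split=> // [F' scF' | c cyc]; first by rewrite cardF; apply/max1/asboolP.
have c3 : 2 < size c by case/andP: cyc.
apply/eqP; rewrite eqn_leq c3 andbT leqNgt; apply/negP => long.
have cyce := is_cycle_edge_subset simple (proj1 scF) cyc.
have [i [x [y [s1 [v [s2 [ct exy s1n]]]]]]] := long_cycle_chord eirr chord cyce long.
rewrite -(is_cycle_rot _ i) ct in cyc.
have [F' [scF' cardF' fewer]] := chord_swap scF exy cyc s1n.
have : opt F' by rewrite /opt cardF' cardF eqxx andbT; apply/asboolP.
by move/minF; rewrite leqNgt fewer.
Qed.
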